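(* Let $X,Y$ be metric spaces, $X\times Y$ with the maximum metric, $\Delta$ a scale and $g,h$ Hausdorff functions. For any set $E\subseteq X\times Y$, $$\mathcal P^{gh}_{\Delta,0}(E)\ge\mathcal P^{h}_{\Delta}(X)\cdot\inf_{x\in X}\underline{\mathcal B}^{g}_0(E_x).$$
   Context: In a metric space $(X,d)$: $\operatorname{gap}F=\inf\{d(x,y):x,y\in F,x\neq y\}$, $C_\delta(E)=\sup\{|F|:F\subseteq E,\operatorname{gap}F>\delta\}$. A Hausdorff function is a nondecreasing $g:(0,\infty)\to(0,\infty)$; $gh$ is the pointwise product. A scale is a set $\Delta\subseteq(0,\infty)$ with $0$ in its closure. A packing is a family $\pi=\{(x_i,r_i):i\in I\}\subseteq X\times(0,\infty)$ with $d(x_i,x_j)>r_i$ for $i\ne j$; it is a packing of $E$ if all $x_i\in E$, $\Delta$-valued if all $r_i\in\Delta$, $\delta$-fine if all $r_i\le\delta$; $g(\pi)=\sum_ig(r_i)$. $\mathcal P^g_{\Delta,0}(E)=\inf_{\delta>0}\sup\{g(\pi):\pi$ a $\Delta$-valued $\delta$-fine packing of $E\}$; $\mathcal P^g_\Delta(E)=\inf\{\sum_n\mathcal P^g_{\Delta,0}(E_n):E\subseteq\bigcup_nE_n\}$ (countable covers); $\underline{\mathcal B}^g_0(E)=\liminf_{\delta\to0}C_\delta(E)g(\delta)$. $E_x=\{y\in Y:(x,y)\in E\}$. *)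

From HB Require Import structures.
From mathcomp Require Import all_boot all_order all_algebra.
From mathcomp Require Import all_classical all_reals.
From mathcomp Require Import ereal topology sequences esum.
Set Implicit Arguments. Unset Strict Implicit. Unset Printing Implicit Defensive.
Import Order.TTheory GRing.Theory Num.Theory.
Local Open Scope classical_set_scope.
Local Open Scope ring_scope.

Section Defs.
Variable R : realType.

Definition is_metric (T : Type) (d : T -> T -> R) : Prop :=
  [/\ forall x y, 0 <= d x y,
      forall x y, d x y = 0 <-> x = y,
      forall x y, d x y = d y x &
      forall x y z, d x z <= d x y + d y z].

Definition max_metric (X Y : Type) (dX : X -> X -> R) (dY : Y -> Y -> R)
  : X * Y -> X * Y -> R := fun p q => Num.max (dX p.1 q.1) (dY p.2 q.2).

Definition hausdorff_fun (g : R -> R) : Prop :=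
  (forall t, 0 < t -> 0 < g t) /\ (forall s t, 0 < s -> s <= t -> g s <= g t).

Definition scale (D : set R) : Prop :=
  (forall t, D t -> 0 < t) /\ (forall e, 0 < e -> exists2 t, D t & t < e).

Variable T : choiceType.
Variable d : T -> T -> R.

Definition ecard (F : set T) : \bar R := (\esum_(x in F) 1)%E.

(* gap F = inf { d x y : x, y in F, x <> y }  (inf of empty set = +oo) *)
Definition gap (F : set T) : \bar R :=
  ereal_inf [set v | exists x y, [/\ F x, F y, x <> y & v = (d x y)%:E]].

Definition Ccap (delta : R) (E : set T) : \bar R :=
  ereal_sup [set ecard F | F in [set F | F `<=` E /\ (delta%:E < gap F)%E]].

Definition lower_box0 (g : R -> R) (E : set T) : \bar R :=
  ereal_sup [set ereal_inf [set (Ccap delta E * (g delta)%:E)%E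
                           | delta in [set delta | 0 < delta < eta]]
            | eta in [set eta : R | 0 < eta]].

(* A packing {(x, r x) : x in A}: the centres form the set A and radii are r.
   (Distinct members of a packing have distinct centres since radii are > 0.) *)
Definition packing (A : set T) (r : T -> R) : Prop :=
  (forall x, A x -> 0 < r x) /\
  (forall x y, A x -> A y -> x <> y -> r x < d x y).

Definition packing_of (E : set T) (D : set R) (delta : R) (A : set T) (r : T -> R) :=
  [/\ packing A r, A `<=` E, (forall x, A x -> D (r x)) & (forall x, A x -> r x <= delta)].

Definition gpack (g : R -> R) (A : set T) (r : T -> R) : \bar R :=
  (\esum_(x in A) (g (r x))%:E)%E.

Definition P0 (g : R -> R) (D : set R) (E : set T) : \bar R :=
  ereal_inf [set ereal_sup [set v | exists A r, packing_of E D delta A r /\ v = gpack g A r]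
            | delta in [set delta : R | 0 < delta]].

Definition Pmeas (g : R -> R) (D : set R) (E : set T) : \bar R :=
  ereal_inf [set (\sum_(n <oo) P0 g D (En n))%E
            | En in [set En : nat -> set T | E `<=` \bigcup_n En n]].

End Defs.

(* E_x is the library's classical_sets.xsection E x = [set y | (x, y) \in E]. *)

(* Fix b below inf_x B^g_0(E_x).  The sets S_n of those x with
   C_delta(E_x) g(delta) > b for every delta < 1/(n+1) increase to X.  Given a
   delta-fine packing {(x_i, r_i)} of S_n, choose in each fibre E_{x_i} an
   r_i-separated set of more than b / g(r_i) points; in the maximum metric these
   points, with radius r_i, form a packing of E, whence
   b P^h_{Delta,0}(S_n) <= P^{gh}_{Delta,0}(E).  The premeasure P^h_{Delta,0}
   does not see closures, and for an increasing sequence of closed sets A_n one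
   has P^h_Delta(U_n A_n) <= sup_n P^h_{Delta,0}(A_n): cut A_{n+1} \ A_n into
   annuli according to the distance to A_n; annuli of equal parity are
   positively separated, so their premeasures add up and the tail of the series
   of premeasures of annuli is small. *)

From HB Require Import structures.
From mathcomp Require Import all_boot all_order all_algebra.
From mathcomp Require Import all_classical all_reals.
From mathcomp Require Import ereal sequences esum normedtype.
From mathcomp Require Import lra.
From mathcomp Require Import finmap.
Import Order.TTheory GRing.Theory Num.Theory.
Local Open Scope classical_set_scope.
Local Open Scope ring_scope.
Set Implicit Arguments.
Unset Strict Implicit.
Unset Printing Implicit Defensive.

Lemma exists_crossing (P : nat -> Prop) K m : (K <= m)%N -> ~ P K -> P m ->
  exists k, [/\ (K <= k)%N, ~ P k & P k.+1].
Proof.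
move=> + nPK; elim: m => [|m IH] Km Pm.
  by move: Km; rewrite leqn0 => /eqP K0; rewrite K0 in nPK.
have [Km'|mK] := leqP K m.
  by have [/(IH Km')|nPm] := pselect (P m); last exists m.
have K1 : K = m.+1 by apply/eqP; rewrite eqn_leq Km mK.
by rewrite K1 in nPK.
Qed.

Lemma bigcup_sub_layers (T : Type) (A : (set T)^nat) :
  \bigcup_n A n `<=` \bigcup_n (if n is m.+1 then A m.+1 `\` A m else A 0%N).
Proof.
move=> x [m _ Amx]; have [A0x|nA0x] := pselect (A 0%N x); first by exists 0%N.
have [k [_ nAkx Ak1x]] := exists_crossing (P := fun k => A k x) (leq0n m) nA0x Amx.
by exists k.+1.
Qed.

Lemma seq_min_gt0 (R : realDomainType) (T : eqType) (s : seq T) (f : T -> R) :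
  {in s, forall x, 0 < f x} -> exists2 e, 0 < e & {in s, forall x, e <= f x}.
Proof.
elim: s => [|a s IH] f_gt0; first by exists 1.
have [e e0 le_e] := IH (fun x xs => f_gt0 x (mem_behead (s := a :: s) xs)).
have fa0 := f_gt0 a (mem_head a s).
exists (Order.min e (f a)); first by rewrite lt_min e0.
move=> x; rewrite in_cons => /predU1P[->|xs]; first by rewrite ge_min lexx orbT.
by rewrite ge_min le_e.
Qed.

Lemma finite_set_min_gt0 (R : realDomainType) (T : choiceType) (P : set T)
    (f : T -> R) : finite_set P -> (forall x, P x -> 0 < f x) ->
  exists2 e, 0 < e & forall x, P x -> e <= f x.
Proof.
move=> finP f_gt0.
have [e e0 le_e] : exists2 e, 0 < e & {in fset_set P, forall x, e <= f x}.
  by apply: seq_min_gt0 => x; rewrite in_fset_set // => /set_mem; exact: f_gt0.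
by exists e => // x Px; apply: le_e; rewrite in_fset_set // mem_set.
Qed.

Section ExtendedReals.
Variable R : realType.
Local Open Scope ereal_scope.

Lemma nneseries_le (u : (\bar R)^nat) c : (forall n, 0 <= u n) ->
  (forall N, \sum_(0 <= k < N) u k <= c) -> \sum_(0 <= k <oo) u k <= c.
Proof.
by move=> u0 le_c; apply: lime_le; [exact: is_cvg_nneseries|exact: nearW].
Qed.

Lemma ereal_supD_le (S1 S2 : set (\bar R)) c : S1 0 -> S2 0 ->
  (forall u v, S1 u -> S2 v -> u + v <= c) -> ereal_sup S1 + ereal_sup S2 <= c.
Proof.
move=> S10 S20 le_c.
have le1 : ereal_sup S1 <= c.
  by apply: ge_ereal_sup => u S1u; rewrite -[u]adde0; exact: le_c.
have le2 : ereal_sup S2 <= c.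
  by apply: ge_ereal_sup => v S2v; rewrite -[v]add0e; exact: le_c.
have ge1 : 0 <= ereal_sup S1 by exact: ereal_sup_ubound.
have ge2 : 0 <= ereal_sup S2 by exact: ereal_sup_ubound.
case: c le_c le1 le2 => [c| |] le_c le1 le2; last 2 first.
- by rewrite leey.
- by have := le_trans ge1 le1.
have fin1 : ereal_sup S1 \is a fin_num by rewrite ge0_fin_numE // (le_lt_trans le1) ?ltry.
have fin2 : ereal_sup S2 \is a fin_num by rewrite ge0_fin_numE // (le_lt_trans le2) ?ltry.
apply/lee_addgt0Pr => e e0; have e20 : (0 < e / 2)%R by rewrite divr_gt0.
have [u S1u ltu] := ub_ereal_sup_adherent e20 fin1.
have [v S2v ltv] := ub_ereal_sup_adherent e20 fin2.
move: (le_c _ _ S1u S2v) ltu ltv; rewrite -(fineK fin1) -(fineK fin2).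
case: u {S1u} => [u| |]; case: v {S2v} => [v| |] //=; rewrite ?lte_fin ?lee_fin //.
move=> uv ltu ltv; lra.
Qed.

Lemma mule_esum_le (T : choiceType) (A : set T) (f : T -> \bar R) (c : R) :
  (0 < c)%R -> (forall x, A x -> 0 <= f x) ->
  c%:E * (\esum_(x in A) f x) <= \esum_(x in A) (c%:E * f x).
Proof.
move=> c0 f0; pose f' x := Order.max 0 (f x).
have f'E x : A x -> f' x = f x by move=> Ax; rewrite /f' max_r // f0.
rewrite -(eq_esum f'E) [leRHS](eq_esum (b := fun x => c%:E * f' x)); last first.
  by move=> x Ax; rewrite f'E.
rewrite /esum -ereal_sup_pZl //; apply: ge_ereal_sup => _ [_ [F finF <-] <-].
rewrite ge0_mule_fsumr => [|x]; last by rewrite le_max lexx.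
by apply: ereal_sup_ubound; exists F.
Qed.

Lemma mule_le_approx (M B L : \bar R) : 0 <= M -> 0 <= B -> 0 <= L ->
  (forall b : R, (0 < b)%R -> b%:E < B -> M * b%:E <= L) -> M * B <= L.
Proof.
move=> M0 B0 L0 le_L.
have [->|Bn0] := eqVneq B 0; first by rewrite mule0.
have [->|Mn0] := eqVneq M 0; first by rewrite mul0e.
have {Bn0 B0}Bp : 0 < B by rewrite lt_def Bn0 B0.
have {Mn0 M0}Mp : 0 < M by rewrite lt_def Mn0 M0.
case: B Bp le_L => [b| |] // Bp le_L.
  apply/lee_mul01Pr; first by rewrite mule_ge0 ?ltW.
  move=> r /andP[r0 r1]; rewrite muleCA -EFinM; apply: le_L.
    by rewrite mulr_gt0 // -lte_fin.
  by rewrite lte_fin gtr_pMl // -lte_fin.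
rewrite gt0_muley //; case: L L0 le_L => [l| |] // L0 le_L.
case: M Mp le_L => [m| |] // Mp le_L; last first.
  by have := le_L 1%R ltr01 (ltry _); rewrite mule1.
rewrite lte_fin in Mp; rewrite lee_fin in L0.
have l1m : (0 < (l + 1) / m)%R by rewrite divr_gt0 //; lra.
have := le_L _ l1m (ltry _).
rewrite -EFinM lee_fin mulrCA divff ?gt_eqF // mulr1 => le_l.
by exfalso; clear -le_l; lra.
Qed.

End ExtendedReals.

Definition inv_succ (R : realType) (k : nat) : R := k.+1%:R^-1.

Lemma inv_succ_gt0 (R : realType) k : 0 < inv_succ R k.
Proof. by rewrite invr_gt0 ltr0n. Qed.

Lemma le_inv_succ (R : realType) m k : (m <= k)%N -> inv_succ R k <= inv_succ R m.
Proof. by move=> mk; rewrite lef_pV2 ?posrE ?ltr0n // ler_nat. Qed.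

Lemma lt_inv_succ (R : realType) m k : (m < k)%N -> inv_succ R k < inv_succ R m.
Proof. by move=> mk; rewrite ltf_pV2 ?posrE ?ltr0n // ltr_nat. Qed.

Lemma inv_succ_small (R : realType) (e : R) : 0 < e -> exists k, inv_succ R k <= e.
Proof.
move=> e0; exists (Num.truncn e^-1).
rewrite -[leRHS]invrK lef_pV2 ?posrE ?ltr0n ?invr_gt0 //.
exact/ltW/truncnS_gt.
Qed.

Section PackingMeasure.
Variables (R : realType) (X : choiceType) (d : X -> X -> R) (h : R -> R).
Variable D : set R.
Hypothesis d_metric : is_metric d.
Hypothesis h_gt0 : forall t, 0 < t -> 0 < h t.

Section Premeasure.
Local Open Scope ereal_scope.

Definition packing_sup (delta : R) (Z : set X) : \bar R :=
  ereal_sup [set v | exists A r, packing_of d Z D delta A r /\ v = gpack h A r].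

Lemma packing_of_set0 delta Z : packing_of d Z D delta set0 (fun=> 1%R).
Proof. by split=> //; split. Qed.

Lemma gpack_set0 (r : X -> R) : gpack h set0 r = 0.
Proof. exact: esum_set0. Qed.

Lemma packing_sup_ub delta Z A r :
  packing_of d Z D delta A r -> gpack h A r <= packing_sup delta Z.
Proof. by move=> pk; apply: ereal_sup_ubound; exists A, r. Qed.

Lemma packing_sup_le delta Z c :
  (forall A r, packing_of d Z D delta A r -> gpack h A r <= c) ->
  packing_sup delta Z <= c.
Proof. by move=> le_c; apply: ge_ereal_sup => _ [A [r [pk ->]]]; exact: le_c. Qed.

Lemma packing_sup_ge0 delta Z : 0 <= packing_sup delta Z.
Proof.
by rewrite -(gpack_set0 (fun=> 1%R)); apply/packing_sup_ub/packing_of_set0.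
Qed.

Lemma le_packing_sup delta delta' Z Z' : (delta <= delta')%R -> Z `<=` Z' ->
  packing_sup delta Z <= packing_sup delta' Z'.
Proof.
move=> le_delta ZZ'; apply: packing_sup_le => A r [pk AZ Dr r_le].
apply: packing_sup_ub; split => //; first exact: subset_trans ZZ'.
by move=> x Ax; apply: le_trans le_delta; exact: r_le.
Qed.

Lemma P0_le_packing_sup delta Z : (0 < delta)%R -> P0 d h D Z <= packing_sup delta Z.
Proof. by move=> delta0; apply: ereal_inf_lbound; exists delta. Qed.

Lemma P0_ge0 Z : 0 <= P0 d h D Z.
Proof. by apply: le_ereal_inf_tmp => _ [delta _ <-]; exact: packing_sup_ge0. Qed.

Lemma le_P0 Z Z' : Z `<=` Z' -> P0 d h D Z <= P0 d h D Z'.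
Proof.
move=> ZZ'; apply: le_ereal_inf_tmp => _ [delta delta0 <-].
exact: le_trans (P0_le_packing_sup _ delta0) (le_packing_sup (lexx _) ZZ').
Qed.

Lemma P0_ge_packing_sup c Z (eta : R) : (0 < eta)%R ->
  (forall delta, (0 < delta)%R -> (delta <= eta)%R -> c <= packing_sup delta Z) ->
  c <= P0 d h D Z.
Proof.
move=> eta0 le_c; apply: le_ereal_inf_tmp => _ [delta /= delta0 <-].
have m0 : (0 < Order.min delta eta)%R by rewrite lt_min delta0.
apply: le_trans (le_c _ m0 _) (le_packing_sup _ (@subset_refl _ _)).
  by rewrite ge_min lexx orbT.
by rewrite ge_min lexx.
Qed.

Lemma P0_set0 : P0 d h D set0 = 0.
Proof.
apply/eqP; rewrite eq_le P0_ge0 andbT.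
apply: le_trans (P0_le_packing_sup set0 ltr01) _.
apply: packing_sup_le => A r [_ A0 _ _].
by rewrite (_ : A = set0) ?gpack_set0 //; apply/seteqP; split.
Qed.

Lemma Pmeas_ge0 Z : 0 <= Pmeas d h D Z.
Proof.
apply: le_ereal_inf_tmp => _ [C _ <-].
by apply: nneseries_ge0 => n _ _; exact: P0_ge0.
Qed.

Lemma Pmeas_le_cover Z (C : (set X)^nat) :
  Z `<=` \bigcup_k C k -> Pmeas d h D Z <= \sum_(k <oo) P0 d h D (C k).
Proof. by move=> ZC; apply: ereal_inf_lbound; exists C. Qed.

Lemma le_Pmeas Z Z' : Z `<=` Z' -> Pmeas d h D Z <= Pmeas d h D Z'.
Proof.
move=> ZZ'; apply: le_ereal_inf_tmp => _ [C Z'C <-].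
exact/Pmeas_le_cover/(subset_trans ZZ').
Qed.

Lemma Pmeas_le_P0 Z : Pmeas d h D Z <= P0 d h D Z.
Proof.
rewrite -[leRHS]adde0.
rewrite (_ : P0 d h D Z + 0 =
  \sum_(k <oo) P0 d h D (if k == 0%N then Z else set0)).
  by apply: Pmeas_le_cover => x Zx; exists 0%N.
rewrite nneseries_recl // => [|k _]; last exact: P0_ge0.
by rewrite eseries0 // => k k1 _; rewrite ifN ?P0_set0 // -lt0n.
Qed.

Lemma Pmeas_le_double_cover (A : (set X)^nat) (C : nat -> (set X)^nat) :
  (forall n, A n `<=` \bigcup_k C n k) ->
  Pmeas d h D (\bigcup_n A n) <= \sum_(n <oo) \sum_(k <oo) P0 d h D (C n k).
Proof.
move=> AC; have P0C_ge0 p : 0 <= (P0 d h D \o uncurry C) p by exact: P0_ge0.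
have /card_esym/ppcard_eqP[f] := card_nat2.
have -> : \sum_(n <oo) \sum_(k <oo) P0 d h D (C n k) =
          \sum_(i <oo) (P0 d h D \o uncurry C) (f i).
  rewrite -(esum_pred_image _ f xpredT) ?[fun=> _]set_true //.
  have -> : [set f i | i in xpredT] = [set: nat * nat].
    by apply/seteqP; split=> // p _; exists (f^-1%FUN p) => //; rewrite invK ?in_setT.
  rewrite nneseries_esumT => [|n]; last by apply: nneseries_ge0 => k _ _; exact: P0_ge0.
  under eq_esum => n _.
    by rewrite nneseries_esumT; [over|move=> k; exact: P0_ge0].
  rewrite esum_esum => [|i j _ _]; last exact: P0_ge0.
  rewrite (_ : setXR _ _ = setT); last by apply/seteqP.
  by apply: eq_esum => -[].
apply: (Pmeas_le_cover (C := uncurry C \o f)) => x [n _ /AC[k _ Cx]].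
by exists (f^-1%FUN (n, k)) => //=; rewrite invK ?in_setT.
Qed.

Lemma Pmeas_cover_approx Z (e : R) : Pmeas d h D Z < +oo -> (0 < e)%R ->
  exists2 C : (set X)^nat,
    Z `<=` \bigcup_k C k & \sum_(k <oo) P0 d h D (C k) <= Pmeas d h D Z + e%:E.
Proof.
move=> Zfin e0; have : Pmeas d h D Z \is a fin_num by rewrite ge0_fin_numE ?Pmeas_ge0.
by move=> /(lb_ereal_inf_adherent e0)[_ [C ZC <-] /ltW]; exists C.
Qed.

Lemma Pmeas_sigma_subadditive (A : (set X)^nat) :
  Pmeas d h D (\bigcup_n A n) <= \sum_(n <oo) Pmeas d h D (A n).
Proof.
have [[n An_oo]|/forallNP Afin] := pselect (exists n, Pmeas d h D (A n) = +oo).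
  rewrite (eseries_pinfty _ _ An_oo) ?leey // => k _.
  by rewrite gt_eqF // (lt_le_trans _ (Pmeas_ge0 _)) ?ltNy0.
apply/lee_addgt0Pr => e e0.
pose e_ n := (e / (2 ^ n.+1)%:R)%R.
pose good n (Cn : (set X)^nat) := A n `<=` \bigcup_k Cn k /\
  \sum_(k <oo) P0 d h D (Cn k) <= Pmeas d h D (A n) + (e_ n)%:E.
have [C AC] : {C : nat -> (set X)^nat & forall n, good n (C n)}.
  apply: (@choice _ _ good) => n.
  have [||Cn ACn le_Cn] := @Pmeas_cover_approx (A n) (e_ n); last by exists Cn.
  - by rewrite ltey; exact/eqP/Afin.
  - by rewrite divr_gt0 // ltr0n expn_gt0.
apply: le_trans (Pmeas_le_double_cover (fun n => (AC n).1)) _.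
apply: le_trans (epsilon_trick _ _ (ltW e0)); last by move=> n; exact: Pmeas_ge0.
apply: lee_nneseries => [n _ _|n _]; last exact: (AC n).2.
by apply: nneseries_ge0 => k _ _; exact: P0_ge0.
Qed.

End Premeasure.

Let dC x y : d x y = d y x. Proof. by case: d_metric. Qed.
Let d_triangle x y z : d x z <= d x y + d y z. Proof. by case: d_metric. Qed.
Let dxx x : d x x = 0. Proof. by case: d_metric => _ /(_ x x) [_ ->]. Qed.

Lemma packing_of_setU (A B PA PB : set X) rA rB delta eps : delta < eps ->
  (forall a b, A a -> B b -> eps <= d a b) ->
  packing_of d A D delta PA rA -> packing_of d B D delta PB rB ->
  exists r, packing_of d (A `|` B) D delta (PA `|` PB) r /\
    gpack h (PA `|` PB) r = (gpack h PA rA + gpack h PB rB)%E.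
Proof.
move=> delta_eps sepAB [[rA0 pkA] PAA DA rA_le] [[rB0 pkB] PBB DB rB_le].
have PA_PB x : PA x -> ~ PB x.
  move=> PAx PBx; have := sepAB _ _ (PAA _ PAx) (PBB _ PBx).
  apply/negP; rewrite dxx -ltNge; apply: lt_le_trans (rA0 _ PAx) _.
  exact: le_trans (rA_le _ PAx) (ltW delta_eps).
pose r x := if x \in PA then rA x else rB x.
have rA_E x : PA x -> r x = rA x by move=> PAx; rewrite /r mem_set.
have rB_E x : PB x -> r x = rB x.
  by move=> PBx; rewrite /r ifF //; apply/negbTE/negP => /set_mem /PA_PB; apply.
exists r; split.
  split; [split|by move=> x [/PAA|/PBB]; [left|right]| |].
  - by move=> x [PAx|PBx]; [rewrite rA_E ?rA0|rewrite rB_E ?rB0].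
  - move=> x y [PAx|PBx] [PAy|PBy] xy.
    + by rewrite rA_E //; exact: pkA.
    + rewrite rA_E //; apply: le_lt_trans (rA_le _ PAx) _.
      exact: lt_le_trans delta_eps (sepAB _ _ (PAA _ PAx) (PBB _ PBy)).
    + rewrite rB_E // dC; apply: le_lt_trans (rB_le _ PBx) _.
      exact: lt_le_trans delta_eps (sepAB _ _ (PAA _ PAy) (PBB _ PBx)).
    + by rewrite rB_E //; exact: pkB.
  - by move=> x [PAx|PBx]; [rewrite rA_E //; exact: DA|rewrite rB_E //; exact: DB].
  - by move=> x [PAx|PBx]; [rewrite rA_E ?rA_le|rewrite rB_E ?rB_le].
rewrite /gpack (esumID PA) => [|x [PAx|PBx]]; last 2 first.
- by rewrite rA_E // lee_fin ltW // h_gt0 // rA0.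
- by rewrite rB_E // lee_fin ltW // h_gt0 // rB0.
rewrite setUK (_ : _ `&` _ = PB); last first.
  by apply/seteqP; split=> [x [[//|]] |x PBx]; [|split; [right|move/PA_PB]].
by congr (_ + _)%E; apply: eq_esum => x ?; [rewrite rA_E|rewrite rB_E].
Qed.

Lemma P0_setU_ge (A B : set X) eps : 0 < eps ->
  (forall a b, A a -> B b -> eps <= d a b) ->
  (P0 d h D A + P0 d h D B <= P0 d h D (A `|` B))%E.
Proof.
move=> eps0 sepAB; have eps20 : 0 < eps / 2 by rewrite divr_gt0.
apply: (P0_ge_packing_sup eps20) => delta delta0 delta_le.
have delta_eps : delta < eps by lra.
apply: le_trans (_ : packing_sup delta A + packing_sup delta B <= _)%E.
  by apply: leeD; exact: P0_le_packing_sup.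
apply: ereal_supD_le.
- by exists set0, (fun=> 1); rewrite gpack_set0; split => //; exact: packing_of_set0.
- by exists set0, (fun=> 1); rewrite gpack_set0; split => //; exact: packing_of_set0.
move=> _ _ [PA [rA [pkA ->]]] [PB [rB [pkB ->]]].
have [r [pk <-]] := packing_of_setU delta_eps sepAB pkA pkB.
exact: packing_sup_ub.
Qed.

Definition dclosure (S : set X) :=
  [set x | forall e, 0 < e -> exists2 z, S z & d x z < e].

Definition dclosed (F : set X) :=
  forall x, ~ F x -> exists2 e, 0 < e & forall a, F a -> e <= d x a.

Lemma subset_dclosure S : S `<=` dclosure S.
Proof. by move=> x Sx e e0; exists x; rewrite ?dxx. Qed.

Lemma dclosureS S S' : S `<=` S' -> dclosure S `<=` dclosure S'.
Proof. by move=> SS' x clx e /clx[z /SS' S'z xz]; exists z. Qed.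

Lemma dclosure_closed S : dclosed (dclosure S).
Proof.
move=> x ncl; have [e e0 far_e] : exists2 e, 0 < e & forall z, S z -> e <= d x z.
  apply: contrapT => nfar; apply: ncl => e e0; apply: contrapT => nclose.
  apply: nfar; exists e => // z Sz; rewrite leNgt; apply/negP => lt_e.
  by apply: nclose; exists z.
have e20 : 0 < e / 2 by rewrite divr_gt0.
exists (e / 2) => // a /(_ _ e20)[z Sz az].
by have := far_e _ Sz; have := d_triangle x a z; lra.
Qed.

Lemma packing_slack (A F : set X) r : packing d A r -> F `<=` A -> finite_set F ->
  exists2 e, 0 < e & forall x y, F x -> F y -> x <> y -> r x + e <= d x y.
Proof.
move=> [_ pk] FA finF; pose P := [set p : X * X | [/\ F p.1, F p.2 & p.1 <> p.2]].
have finP : finite_set P by apply: sub_finite_set (finite_setX finF finF) => p [].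
have [|e e0 le_e] := @finite_set_min_gt0 R _ P (fun p => d p.1 p.2 - r p.1) finP.
  by move=> [x y] [/= /FA Ax /FA Ay xy]; rewrite subr_gt0; exact: pk.
by exists e => // x y Fx Fy xy; rewrite -lerBrDl; exact: (le_e (x, y)).
Qed.

Lemma packing_perturb (F : set X) (r : X -> R) (phi : X -> X) e :
  (forall x, F x -> 0 < r x) ->
  (forall x y, F x -> F y -> x <> y -> r x + e <= d x y) ->
  (forall x, F x -> d x (phi x) < e / 2) ->
  set_inj F phi /\ packing d (phi @` F) (r \o pinv_ id F phi).
Proof.
move=> r0 slack close.
have far x y : F x -> F y -> x <> y -> r x < d (phi x) (phi y).
  move=> Fx Fy xy; have := slack _ _ Fx Fy xy.
  have := d_triangle x (phi x) y; have := d_triangle (phi x) (phi y) y.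
  by have := close _ Fx; have := close _ Fy; rewrite (dC y (phi y)); lra.
have phi_inj : set_inj F phi.
  move=> x y /set_mem Fx /set_mem Fy phixy; apply: contrapT => xy.
  by have := far _ _ Fx Fy xy; rewrite phixy dxx ltNge ltW ?r0.
have phiK x : F x -> pinv_ id F phi (phi x) = x.
  by move=> Fx; apply: (pinvKV id phi_inj); exact: mem_set.
split=> //; split=> [_ [x Fx <-]|_ _ [x Fx <-] [y Fy <-] nxy] /=; rewrite phiK //.
  exact: r0.
by apply: far => // xy; apply: nxy; rewrite xy.
Qed.

Lemma packing_sup_dclosure delta S :
  (packing_sup delta (dclosure S) <= packing_sup delta S)%E.
Proof.
apply: packing_sup_le => A r [[r0 pk] AS DA r_le].
apply: ge_ereal_sup => _ [F [finF FA] <-].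
have [e e0 slack] := packing_slack (conj r0 pk) FA finF.
have e20 : 0 < e / 2 by rewrite divr_gt0.
have [phi phiP] : {phi : X -> X & forall x, F x -> S (phi x) /\ d x (phi x) < e / 2}.
  apply: (@choice _ _ (fun x z => F x -> S z /\ d x z < e / 2)) => x.
  have [Fx|nFx] := pselect (F x); last by exists x.
  by have [z Sz xz] := AS _ (FA _ Fx) _ e20; exists z.
have [phi_inj pk_phi] := packing_perturb (fun x Fx => r0 _ (FA _ Fx)) slack
  (fun x Fx => (phiP x Fx).2).
have phiK x : F x -> pinv_ id F phi (phi x) = x.
  by move=> Fx; apply: (pinvKV id phi_inj); exact: mem_set.
have pkS : packing_of d S D delta (phi @` F) (r \o pinv_ id F phi).
  split=> // [_ [x Fx <-]|_ [x Fx <-]|_ [x Fx <-]] /=; rewrite ?phiK //.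
  - exact: (phiP x Fx).1.
  - exact/DA/FA.
  - exact/r_le/FA.
apply: le_trans _ (packing_sup_ub pkS).
rewrite /gpack esum_image // -(esum_fset finF) => [|x /set_mem Fx]; last first.
  by rewrite lee_fin ltW // h_gt0 // r0 //; exact: FA.
by apply: le_esum => x Fx /=; rewrite phiK.
Qed.

Lemma P0_dclosure S : (P0 d h D (dclosure S) <= P0 d h D S)%E.
Proof.
apply: le_ereal_inf_tmp => _ [delta delta0 <-].
by apply: le_trans (packing_sup_dclosure delta S); exact: P0_le_packing_sup.
Qed.

Definition apart (F : set X) (t : R) (x : X) := forall a, F a -> t <= d x a.

Lemma dclosed_apart F x : dclosed F -> ~ F x -> exists k, apart F (inv_succ R k) x.
Proof.
move=> Fcl /Fcl[e e0 le_e]; have [k ke] := inv_succ_small e0.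
by exists k => a Fa; exact: le_trans ke (le_e _ Fa).
Qed.

Lemma apart_inv_succS F m k x : (m <= k)%N ->
  apart F (inv_succ R m) x -> apart F (inv_succ R k) x.
Proof. by move=> mk apx a Fa; exact: le_trans (le_inv_succ R mk) (apx _ Fa). Qed.

Lemma not_apart F t x : ~ apart F t x -> exists2 a, F a & d x a < t.
Proof.
move=> napx; apply: contrapT => nclose; apply: napx => a Fa.
by rewrite leNgt; apply/negP => xa; apply: nclose; exists a.
Qed.

Section Annuli.
Variables F G : set X.
Hypotheses (FG : F `<=` G) (F_closed : dclosed F).
Local Open Scope ereal_scope.

Definition outer_part K := [set x | G x /\ apart F (inv_succ R K) x].

Definition annulus k :=
  [set x | [/\ G x, ~ apart F (inv_succ R k) x & apart F (inv_succ R k.+1) x]].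

Definition annuli_upto (j : bool) N :=
  [set x | exists k, [/\ (k < N)%N, odd k = j & annulus k x]].

Lemma setD_outer_annuli K :
  G `\` F `<=` outer_part K `|` \bigcup_(k in [set k | (K <= k)%N]) annulus k.
Proof.
move=> x [Gx nFx]; have [m apm] := dclosed_apart F_closed nFx.
have [apK|napK] := pselect (apart F (inv_succ R K) x); first by left.
have Km : (K <= m)%N.
  by rewrite leqNgt; apply/negP => mK; apply/napK/(apart_inv_succS (ltnW mK)).
have [k [Kk napk apk1]] :=
  exists_crossing (P := fun k => apart F (inv_succ R k) x) Km napK apm.
by right; exists k.
Qed.

Lemma P0_add_outer_part K : P0 d h D F + P0 d h D (outer_part K) <= P0 d h D G.
Proof.
have sub : F `|` outer_part K `<=` G by move=> x [/FG|[]].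
apply: le_trans (le_P0 sub); apply: (P0_setU_ge (inv_succ_gt0 R K)).
by move=> a x Fa [_ apx]; rewrite dC; exact: apx.
Qed.

Lemma annuli_upto_sub j N : annuli_upto j N `<=` G.
Proof. by move=> x [k [_ _ []]]. Qed.

Lemma annuli_upto_apart j N y x : annuli_upto j N y -> annulus N x -> odd N = j ->
  (inv_succ R N.-1 - inv_succ R N <= d y x)%R.
Proof.
move=> [k [kN okj [_ _ apy]]] [_ napx _] oN.
have [a Fa xa] := not_apart napx.
have k2N : (k.+2 <= N)%N.
  rewrite ltn_neqAle kN andbT; apply/negP => /eqP kN'.
  by move: oN; rewrite -kN' /= okj; case: j {okj}.
have : (inv_succ R N.-1 <= inv_succ R k.+1)%R.
  by apply: le_inv_succ; rewrite -ltnS (ltn_predK k2N).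
by have := apy _ Fa; have := d_triangle y x a; lra.
Qed.

Lemma P0_annuli_upto j N :
  \sum_(0 <= k < N | odd k == j) P0 d h D (annulus k) <= P0 d h D (annuli_upto j N).
Proof.
elim: N => [|N IH]; first by rewrite big_geq // P0_ge0.
have upto_S : annuli_upto j N `<=` annuli_upto j N.+1.
  by move=> x [k [kN ? ?]]; exists k; split => //; exact: ltnW.
rewrite big_mkcond big_nat_recr //= -big_mkcond /=.
case: (eqVneq (odd N) j) => oN; last by rewrite adde0; exact: le_trans IH (le_P0 upto_S).
have sub : annuli_upto j N `|` annulus N `<=` annuli_upto j N.+1.
  by move=> x [/upto_S //|annx]; exists N.
apply: le_trans (le_P0 sub); apply: le_trans (leeD2r _ IH) _.
case: N {IH upto_S sub} oN => [|N] oN.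
  rewrite (_ : annuli_upto j 0 = set0) ?P0_set0 ?add0e ?set0U //.
  by apply/seteqP; split=> // x [k []].
have gap0 : (0 < inv_succ R N - inv_succ R N.+1)%R by rewrite subr_gt0 lt_inv_succ.
by apply: (P0_setU_ge gap0) => y x uy ax; exact: annuli_upto_apart uy ax oN.
Qed.

Lemma annuli_series_le : \sum_(k <oo) P0 d h D (annulus k) <= P0 d h D G + P0 d h D G.
Proof.
apply: nneseries_le => [k|N]; first exact: P0_ge0.
rewrite (bigID (fun k => odd k)) /=; apply: leeD.
  rewrite (eq_bigl (fun k => odd k == true)) => [|k]; last by case: odd.
  exact: le_trans (P0_annuli_upto _ _) (le_P0 (@annuli_upto_sub _ _)).
rewrite (eq_bigl (fun k => odd k == false)) => [|k]; last by case: odd.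
exact: le_trans (P0_annuli_upto _ _) (le_P0 (@annuli_upto_sub _ _)).
Qed.

Lemma Pmeas_setD_le K : Pmeas d h D (G `\` F) <=
  P0 d h D (outer_part K) + \sum_(K <= k <oo) P0 d h D (annulus k).
Proof.
pose C j := if j is j'.+1 then annulus (j' + K) else outer_part K.
apply: le_trans (Pmeas_le_cover (C := C) _) _.
  move=> x /(setD_outer_annuli K)[outx|[k /= Kk annx]]; first by exists 0%N.
  by exists (k - K).+1 => //=; rewrite subnK.
rewrite nneseries_recl // => [|k _]; last exact: P0_ge0.
rewrite -nneseries_addn => [|k]; last exact: P0_ge0.
rewrite -[X in _ <= _ + X]nneseries_addn => [|k]; last exact: P0_ge0.
apply: leeD2l; apply: lee_nneseries => [k _ _|k _]; first exact: P0_ge0.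
by rewrite addn1.
Qed.

Lemma Pmeas_setD_approx (e : R) : P0 d h D G < +oo -> (0 < e)%R ->
  exists K, Pmeas d h D (G `\` F) <= P0 d h D (outer_part K) + e%:E.
Proof.
move=> Gfin e0; have : \sum_(k <oo) P0 d h D (annulus k) < +oo.
  by apply: le_lt_trans annuli_series_le _; rewrite lte_add_pinfty.
move=> /nneseries_tail_cvg /(_ (fun k _ => P0_ge0 _)).
move=> /(_ _ (open_ereal_lt' (_ : 0 < e%:E))) /=; rewrite lte_fin => /(_ e0)[K _ tailK].
exists K; apply: le_trans (Pmeas_setD_le K) _.
by rewrite leeD2l // ltW // tailK /=.
Qed.

End Annuli.

Section ClosedExhaustion.
Local Open Scope ereal_scope.

Lemma Pmeas_bigcup_dclosed_le (A : (set X)^nat) (l : \bar R) :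
  (forall n, A n `<=` A n.+1) -> (forall n, dclosed (A n)) ->
  (forall n, P0 d h D (A n) <= l) -> Pmeas d h D (\bigcup_n A n) <= l.
Proof.
move=> A_incr A_closed le_l.
case: l le_l => [l| |] le_l; last 2 first.
- by rewrite leey.
- by have := le_trans (P0_ge0 (A 0%N)) (le_l 0%N).
have l0 : 0 <= l%:E := le_trans (P0_ge0 (A 0%N)) (le_l 0%N).
apply/lee_addgt0Pr => e e0; pose e_ n := (e / (2 ^ n.+1)%:R)%R.
pose outer n k := outer_part (A n) (A n.+1) k.
have [K leK] : {K : nat -> nat & forall n,
    Pmeas d h D (A n.+1 `\` A n) <= P0 d h D (outer n (K n)) + (e_ n)%:E}.
  apply: (@choice _ _ (fun n k => Pmeas d h D (A n.+1 `\` A n) <=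
    P0 d h D (outer n k) + (e_ n)%:E)) => n.
  apply: Pmeas_setD_approx => //; last by rewrite divr_gt0 // ltr0n expn_gt0.
  exact: le_lt_trans (le_l n.+1) (ltry _).
have telescope M :
    P0 d h D (A 0%N) + \sum_(0 <= n < M) P0 d h D (outer n (K n)) <= P0 d h D (A M).
  elim: M => [|M IH]; first by rewrite big_geq // adde0.
  rewrite big_nat_recr //= addeA; apply: le_trans (leeD2r _ IH) _.
  exact: P0_add_outer_part.
have sum_e M : \sum_(0 <= n < M) (e_ n)%:E <= e%:E.
  apply: le_trans (epsilon_trick0 xpredT (ltW e0)).
  by apply: nneseries_lim_ge => n _ _; rewrite lee_fin ltW // divr_gt0 // ltr0n expn_gt0.
apply: le_trans (le_Pmeas (@bigcup_sub_layers X A)) _.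
apply: le_trans (Pmeas_sigma_subadditive _) _.
apply: nneseries_le => [n|[|M]]; first exact: Pmeas_ge0.
  by rewrite big_geq // adde_ge0 // lee_fin ltW.
rewrite big_nat_recl //=; apply: le_trans (_ : P0 d h D (A 0%N) +
  \sum_(0 <= n < M) (P0 d h D (outer n (K n)) + (e_ n)%:E) <= _).
  by apply: leeD; [exact: Pmeas_le_P0|apply: lee_sum => n _; exact: leK].
rewrite big_split /= addeA; apply: leeD; last exact: sum_e.
exact: le_trans (telescope M) (le_l M).
Qed.

End ClosedExhaustion.

End PackingMeasure.

Lemma Ccap_ge0 (R : realType) (T : choiceType) (d : T -> T -> R) delta (F : set T) :
  (0 <= Ccap d delta F)%E.
Proof.
apply: le_ereal_sup_tmp; exists 0%E => //; exists set0; last exact: esum_set0.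
split => //; rewrite /gap (_ : [set v | _] = set0) ?ereal_inf0 ?ltry //.
by apply/seteqP; split => // v [x [y []]].
Qed.

Lemma lower_box0_ge0 (R : realType) (T : choiceType) (d : T -> T -> R) (g : R -> R)
    (F : set T) : (forall t, 0 < t -> 0 < g t) -> (0 <= lower_box0 d g F)%E.
Proof.
move=> g_gt0; apply: le_ereal_sup_tmp.
exists (ereal_inf [set (Ccap d delta F * (g delta)%:E)%E
                  | delta in [set delta | 0 < delta < 1]]); first by exists 1 => //=.
apply: le_ereal_inf_tmp => _ [delta /andP[delta0 _] <-].
by rewrite mule_ge0 ?Ccap_ge0 // lee_fin ltW ?g_gt0.
Qed.

Section FibrePacking.
Variables (R : realType) (X Y : choiceType) (dX : X -> X -> R) (dY : Y -> Y -> R).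
Variables (g h : R -> R) (D : set R) (E : set (X * Y)).
Hypothesis g_gt0 : forall t, 0 < t -> 0 < g t.
Hypothesis h_gt0 : forall t, 0 < t -> 0 < h t.
Hypothesis dX_metric : is_metric dX.
Local Notation dXY := (max_metric dX dY).
Local Notation gh := (fun t => g t * h t).
Local Open Scope ereal_scope.

Lemma packing_of_fibres (Z A : set X) (r : X -> R) (F : X -> set Y) delta :
  packing_of dX Z D delta A r ->
  (forall x, A x -> F x `<=` xsection E x /\ (r x)%:E < gap dY (F x)) ->
  packing_of dXY E D delta (A `*`` F) (r \o fst).
Proof.
move=> [[r0 pk] AZ DA r_le] FP; split=> [| [x y] [/= Ax Fy] | p [Ap _] | p [Ap _]].
- split=> [p [Ap _]|[x y] [x' y'] [/= Ax Fy] [/= Ax' Fy'] neq]; first exact: r0.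
  rewrite /max_metric lt_max /=; apply/orP.
  have [exx'|xx'] := pselect (x = x'); last by left; exact: pk.
  subst x'; right; rewrite -lte_fin; apply: lt_le_trans (FP x Ax).2 _.
  by apply: ereal_inf_lbound; exists y, y'; split=> // yy'; apply: neq; rewrite yy'.
- by have := (FP x Ax).1 _ Fy; rewrite /xsection /= => /set_mem.
- exact: DA.
- exact: r_le.
Qed.

Lemma gpack_fibres (A : set X) (r : X -> R) (F : X -> set Y) :
  (forall x, A x -> (0 < r x)%R) ->
  gpack gh (A `*`` F) (r \o fst) =
  \esum_(x in A) \esum_(y in F x) (g (r x) * h (r x))%:E.
Proof.
move=> r0; rewrite esum_esum // => x y Ax _.
by rewrite lee_fin ltW // mulr_gt0 ?g_gt0 ?h_gt0 ?r0.
Qed.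

Lemma exists_fibre_set x (t b : R) : (0 < t)%R ->
  b%:E < Ccap dY t (xsection E x) * (g t)%:E ->
  exists F : set Y, [/\ F `<=` xsection E x, t%:E < gap dY F &
                        b%:E < (g t)%:E * ecard R F].
Proof.
move=> t0; rewrite muleC /Ccap -ereal_sup_pZl ?g_gt0 //.
by move=> /ereal_sup_gt[_ [_ [F [FE gapF] <-] <-] lt_b]; exists F.
Qed.

Lemma P0_fibre_lift (Z : set X) (b eta : R) : (0 < b)%R -> (0 < eta)%R ->
  (forall x, Z x -> forall delta, (0 < delta)%R -> (delta < eta)%R ->
     b%:E < Ccap dY delta (xsection E x) * (g delta)%:E) ->
  b%:E * P0 dX h D Z <= P0 dXY gh D E.
Proof.
move=> b0 eta0 Ccap_gt; have eta20 : (0 < eta / 2)%R by rewrite divr_gt0.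
apply: (P0_ge_packing_sup eta20) => delta delta0 delta_eta.
have delta_lt : (delta < eta)%R by lra.
apply: (@le_trans _ _ (b%:E * packing_sup dX h D delta Z)).
  by apply: lee_wpmul2l; [rewrite lee_fin ltW|exact: P0_le_packing_sup].
rewrite -ereal_sup_pZl //; apply: ge_ereal_sup => _ [_ [A [r [pk ->]]] <-].
have [[r0 _] AZ _ r_le] := pk.
have [F FP] : {F : X -> set Y & forall x, A x -> [/\ F x `<=` xsection E x,
    (r x)%:E < gap dY (F x) & b%:E < (g (r x))%:E * ecard R (F x)]}.
  apply: (@choice _ _ (fun x Fx => A x -> [/\ Fx `<=` xsection E x,
    (r x)%:E < gap dY Fx & b%:E < (g (r x))%:E * ecard R Fx])) => x.
  have [Ax|nAx] := pselect (A x); last by exists set0.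
  have [Fx FxP] := exists_fibre_set (r0 _ Ax) (Ccap_gt x (AZ _ Ax) _ (r0 _ Ax)
    (le_lt_trans (r_le _ Ax) delta_lt)).
  by exists Fx.
have pkF := packing_of_fibres pk
  (fun x Ax => let: And3 FE gapF _ := FP x Ax in conj FE gapF).
apply: le_trans (packing_sup_ub gh pkF); rewrite gpack_fibres //.
apply: le_trans (mule_esum_le b0 _) _ => [x Ax|]; first by rewrite lee_fin ltW ?h_gt0 ?r0.
apply: le_esum => x Ax; have [_ _ lt_b] := FP x Ax.
have gh0 : (0 < g (r x) * h (r x))%R by rewrite mulr_gt0 ?g_gt0 ?h_gt0 ?r0.
apply: le_trans (_ : (g (r x) * h (r x))%:E * ecard R (F x) <= _); last first.
  by apply: le_trans (mule_esum_le gh0 _) _ => //; apply: le_esum => y _; rewrite mule1.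
rewrite EFinM muleAC; apply: lee_wpmul2r; first by rewrite lee_fin ltW ?h_gt0 ?r0.
exact: ltW.
Qed.

Lemma Pmeas_scaled_le_P0 (b : R) : (0 < b)%R ->
  b%:E < ereal_inf [set lower_box0 dY g (xsection E x) | x in [set: X]] ->
  Pmeas dX h D [set: X] * b%:E <= P0 dXY gh D E.
Proof.
move=> b0 lt_b.
pose S n := [set x | forall delta, (0 < delta)%R -> (delta < inv_succ R n)%R ->
  b%:E < Ccap dY delta (xsection E x) * (g delta)%:E].
have S_incr n : S n `<=` S n.+1.
  move=> x Sx delta delta0 lt_delta; apply: Sx => //.
  exact: lt_le_trans lt_delta (le_inv_succ R (leqnSn n)).
have S_cover : [set: X] `<=` \bigcup_n dclosure dX (S n).
  move=> x _; have : b%:E < lower_box0 dY g (xsection E x).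
    by apply: lt_le_trans lt_b _; apply: ereal_inf_lbound; exists x.
  move=> /ereal_sup_gt[_ [eta eta0 <-] /= lt_inf].
  have [n le_eta] := inv_succ_small eta0.
  exists n => //; apply: subset_dclosure => // delta delta0 lt_delta.
  apply: lt_le_trans lt_inf _; apply: ereal_inf_lbound; exists delta => //.
  by rewrite /= delta0 (lt_le_trans lt_delta le_eta).
rewrite muleC -lee_pdivlMl //; apply: le_trans (le_Pmeas dX h D S_cover) _.
apply: Pmeas_bigcup_dclosed_le => // [n|n|n].
- exact: dclosureS.
- exact: dclosure_closed.
rewrite lee_pdivlMl //.
apply: le_trans (P0_fibre_lift b0 (inv_succ_gt0 R n) (fun x Sx => Sx)).
by apply: lee_wpmul2l; [rewrite lee_fin ltW|exact: P0_dclosure].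
Qed.

End FibrePacking.

Theorem lemma3p1 (R : realType) (X Y : choiceType)
  (dX : X -> X -> R) (dY : Y -> Y -> R) (D : set R) (g h : R -> R)
  (E : set (X * Y)) :
  is_metric dX -> is_metric dY -> scale D -> hausdorff_fun g -> hausdorff_fun h ->
  (P0 (max_metric dX dY) (fun t => (g t * h t)%R) D E >=
   Pmeas dX h D [set: X] *
   ereal_inf [set lower_box0 dY g (xsection E x) | x in [set: X]])%E.
Proof.
move=> dX_metric _ _ [g_gt0 _] [h_gt0 _].
apply: mule_le_approx.
- exact: Pmeas_ge0.
- by apply: le_ereal_inf_tmp => _ [x _ <-]; exact: lower_box0_ge0.
- exact: P0_ge0.
- by move=> b b0 lt_b; exact: Pmeas_scaled_le_P0.
Qed.
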